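(* Let $n\geq 2$ be an integer and let $D\subset\{0,1,\ldots,n^2\}$ satisfy $|d-d'|\neq 1$ for all $d,d'\in D$. Let $k\ge1$ and let $(d_1,\ldots,d_k),(d_1',\ldots,d_k')\in D^k$ with $d_j\neq d_j'$ for some $1\le j\le k$. Then the $k$-tiles $T_{d_1,\ldots,d_k}$ and $T_{d_1',\ldots,d_k'}$ of $T_n$ are disjoint.
   Context: Let $b:=-n+i$. $T_n$ is the attractor of $\{z\mapsto b^{-1}(z+d): d\in\{0,1,\ldots,n^2\}\}$, i.e. $T_n=\{\sum_{j\ge1}d_jb^{-j}: d_j\in\{0,\ldots,n^2\}\}$. For $d_1,\ldots,d_k\in\{0,\ldots,n^2\}$, the $k$-tile $T_{d_1,\ldots,d_k}$ is $\{\sum_{j=1}^k d_jb^{-j}+b^{-k}t: t\in T_n\}$. *)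

From Stdlib Require Import Reals List.
From Coquelicot Require Import Coquelicot.
Open Scope C_scope.

Definition base (n : nat) : C := ((- INR n)%R, 1%R).

(* T_n = { sum_{j>=1} d_j b^{-j} : d_j in {0,...,n^2} }, series indexed from 0
   with term j being d_{j+1} b^{-(j+1)} *)
Definition in_Tn (n : nat) (z : C) : Prop :=
  exists d : nat -> nat,
    (forall j, (d j <= n * n)%nat) /\
    is_series (fun j => RtoC (INR (d j)) * / (base n ^ (S j))) z.

Fixpoint csum (k : nat) (f : nat -> C) : C :=
  match k with
  | O => RtoC 0
  | S k' => csum k' f + f k'
  end.

Definition in_tile (n : nat) (ds : list nat) (z : C) : Prop :=
  exists t, in_Tn n t /\
    z = csum (length ds) (fun j => RtoC (INR (nth j ds 0%nat)) * / (base n ^ (S j)))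
        + / (base n ^ length ds) * t.

(* If the tiles met, subtracting the two digit expansions of a common point gives a
   vanishing expansion sum_j e_j b^(-j) with |e_j| <= n^2 whose first nonzero digit e has
   |e| >= 2, because D contains no two consecutive integers.  Multiplying by b^2 leaves
   -b e - e' + (tail), and since Im b = 1 this gives |e| <= |Im tail|.  Bounding
   |Im b^(-j)| exactly for j = 1, 2 and by n^(-j) beyond shows |Im tail| < 2 when n >= 3;
   for n = 2 one more multiplication by b yields |4 e - e'| <= 4 * 0.61 with |e'| <= 4,
   which again forces |e| < 2. *)
From Stdlib Require Import Reals List Lra Lia.
From Coquelicot Require Import Coquelicot.
Open Scope C_scope.

Definition has_expansion (b : C) (f : nat -> R) (u : C) : Prop :=
  is_series (fun i => RtoC (f i) * / b ^ S i) u.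

Section Expansions.

Variable b : C.
Hypothesis b_neq0 : b <> 0.

Lemma expansion_shift f u :
  has_expansion b f u -> has_expansion b (fun i => f (S i)) (b * u - RtoC (f O)).
Proof.
  intro H.
  set (a := fun i => RtoC (f i) * / b ^ S i) in H.
  assert (Htail : is_series (fun i => a (S i)) (u - a O)).
  { apply is_series_incr_1.
    change (is_series a (Cplus (u - a O) (a O))).
    replace (Cplus (u - a O) (a O)) with u by ring.
    exact H. }
  apply (is_series_scal b) in Htail.
  replace (b * u - RtoC (f O)) with (scal b (u - a O))
    by (unfold a; change scal with Cmult; simpl; field; exact b_neq0).
  eapply is_series_ext; [| exact Htail].
  intro i. unfold a. change scal with Cmult. simpl.
  field; split; auto using Cpow_nz.
Qed.

Lemma expansion_unshift f v :
  has_expansion b (fun i => f (S i)) v -> has_expansion b f ((RtoC (f O) + v) / b).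
Proof.
  intro H. apply is_series_decr_1.
  change (is_series (fun i => RtoC (f (S i)) * / b ^ S (S i))
    (Cplus ((RtoC (f O) + v) / b) (Copp (RtoC (f O) * / b ^ 1)))).
  replace (Cplus ((RtoC (f O) + v) / b) (Copp (RtoC (f O) * / b ^ 1))) with (/ b * v)
    by (simpl; field; exact b_neq0).
  apply (is_series_scal (/ b)) in H.
  eapply is_series_ext; [| exact H].
  intro i. change scal with Cmult. simpl.
  field; split; auto using Cpow_nz.
Qed.

Lemma expansion_minus f g u v :
  has_expansion b f u -> has_expansion b g v ->
  has_expansion b (fun i => (f i - g i)%R) (u - v).
Proof.
  intros Hf Hg.
  eapply is_series_ext; [| exact (is_series_minus _ _ _ _ Hf Hg)].
  intro i. change (Cminus (RtoC (f i) * / b ^ S i) (RtoC (g i) * / b ^ S i)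
    = RtoC (f i - g i) * / b ^ S i).
  rewrite RtoC_minus. ring.
Qed.

Lemma expansion_drop_zeros p f u :
  (forall i, (i < p)%nat -> f i = 0%R) -> has_expansion b f u ->
  has_expansion b (fun i => f (p + i)%nat) (b ^ p * u).
Proof.
  revert f u; induction p as [|p IH]; intros f u Hzero H.
  - replace (b ^ 0 * u) with u by (simpl; ring). exact H.
  - apply expansion_shift in H. rewrite (Hzero O) in H by lia.
    replace (b ^ S p * u) with (b ^ p * (b * u - RtoC 0)) by (simpl; ring).
    apply (IH (fun i => f (S i))); [intros i Hi; apply Hzero; lia | exact H].
Qed.

End Expansions.

Fixpoint prepend_digits (ds : list nat) (d : nat -> nat) (i : nat) : nat :=
  match ds, i with
  | nil, _ => d i
  | a :: _, O => a
  | _ :: ds', S i' => prepend_digits ds' d i'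
  end.

Lemma prepend_digits_nth ds d i : (i < length ds)%nat -> prepend_digits ds d i = nth i ds 0%nat.
Proof.
  revert i; induction ds as [|a ds IH]; intros [|i] Hi; simpl in *; try lia; auto.
  apply IH. lia.
Qed.

Lemma prepend_digits_le ds d M i :
  List.Forall (fun a => (a <= M)%nat) ds -> (forall j, (d j <= M)%nat) ->
  (prepend_digits ds d i <= M)%nat.
Proof.
  intros Hds Hd. revert i; induction Hds as [|a ds Ha _ IH]; intros [|i]; simpl; auto.
Qed.

Lemma csum_succ L f : csum (S L) f = f O + csum L (fun j => f (S j)).
Proof. induction L as [|L IH]; simpl in *; [|rewrite IH]; ring. Qed.

Lemma csum_scal L c f : csum L (fun j => c * f j) = c * csum L f.
Proof. induction L as [|L IH]; simpl; [|rewrite IH]; ring. Qed.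

Lemma csum_ext L f g : (forall j, f j = g j) -> csum L f = csum L g.
Proof. intro H. induction L as [|L IH]; simpl; congruence. Qed.

Lemma expansion_prepend_digits (b : C) ds d t : b <> 0 ->
  has_expansion b (fun i => INR (d i)) t ->
  has_expansion b (fun i => INR (prepend_digits ds d i))
    (csum (length ds) (fun j => RtoC (INR (nth j ds 0%nat)) * / b ^ S j) + / b ^ length ds * t).
Proof.
  intros Hb Ht. induction ds as [|a ds IH].
  - replace (csum 0 _ + / b ^ 0 * t) with t by (simpl; field). exact Ht.
  - apply (expansion_unshift b Hb (fun i => INR (prepend_digits (a :: ds) d i))) in IH.
    replace (csum (length (a :: ds)) _ + _) with
      ((RtoC (INR a) + (csum (length ds) (fun j => RtoC (INR (nth j ds 0%nat)) * / b ^ S j)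
         + / b ^ length ds * t)) / b); [exact IH|].
    simpl length. rewrite csum_succ.
    rewrite (csum_ext (length ds)
      (fun j => RtoC (INR (nth (S j) (a :: ds) 0%nat)) * / b ^ S (S j))
      (fun j => / b * (RtoC (INR (nth j ds 0%nat)) * / b ^ S j)))
      by (intro j; simpl; field; split; auto using Cpow_nz).
    rewrite csum_scal. simpl. field. split; auto using Cpow_nz.
Qed.

Lemma tile_expansion n ds z : in_tile n ds z ->
  exists d, (forall j, (d j <= n * n)%nat) /\
    has_expansion (base n) (fun i => INR (prepend_digits ds d i)) z.
Proof.
  intros [t [[d [Hd Ht]] ->]]. exists d. split; [exact Hd|].
  apply expansion_prepend_digits; [|exact Ht].
  intro H. injection H. lra.
Qed.

Lemma is_lim_seq_Im_series (a : nat -> C) (u : C) :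
  is_series a u -> is_lim_seq (fun N => Im (sum_n a N)) (Im u).
Proof.
  intro H. apply (filterlim_comp _ _ _ (sum_n a) Im _ _ _ H).
  intros P [eps HP]. exists eps. intros y [_ Hy]. exact (HP _ Hy).
Qed.

Lemma Im_sum_n (a : nat -> C) N : Im (sum_n a N) = sum_f_R0 (fun i => Im (a i)) N.
Proof.
  induction N as [|N IH]; [now rewrite sum_O|].
  rewrite sum_Sn, tech5, <- IH. reflexivity.
Qed.

Lemma Rabs_Im_expansion_le (b : C) (f : nat -> R) (M B : R) (u : C) :
  (forall i, (Rabs (f i) <= M)%R) ->
  (forall N, (sum_f_R0 (fun i => Rabs (Im (/ b ^ S i))) N <= B)%R) ->
  has_expansion b f u -> (Rabs (Im u) <= M * B)%R.
Proof.
  intros Hf HS Hu.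
  assert (HM : (0 <= M)%R) by exact (Rle_trans _ _ _ (Rabs_pos _) (Hf O)).
  assert (Hpartial : forall N,
    (Rabs (Im (sum_n (fun i => (RtoC (f i) * / b ^ S i)%C) N)) <= M * B)%R).
  { intro N. rewrite Im_sum_n.
    eapply Rle_trans; [apply Rsum_abs|].
    eapply Rle_trans; [|apply Rmult_le_compat_l; [exact HM | apply (HS N)]].
    rewrite scal_sum. apply sum_Rle. intros i _.
    replace (Im (RtoC (f i) * / b ^ S i)) with (f i * Im (/ b ^ S i))%R
      by (destruct (/ b ^ S i); simpl; ring).
    rewrite Rabs_mult, Rmult_comm. apply Rmult_le_compat_l; [apply Rabs_pos | apply Hf]. }
  pose proof (is_lim_seq_abs _ _ (is_lim_seq_Im_series _ _ Hu)) as Hlim.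
  exact (is_lim_seq_le _ _ _ (M * B)%R Hpartial Hlim (is_lim_seq_const _)).
Qed.

Lemma sum_f_R0_le_geometric_tail (c : nat -> R) (r : R) (K : nat) :
  (0 <= r < 1)%R -> (forall i, 0 <= c i)%R -> (forall i, (K < i)%nat -> c i <= r ^ S i)%R ->
  forall N, (sum_f_R0 c N <= sum_f_R0 c K + r ^ S (S K) / (1 - r))%R.
Proof.
  intros Hr Hc Htail N.
  assert (Hrest : forall m, (0 <= r ^ m / (1 - r))%R).
  { intro m. apply Rdiv_le_0_compat; [apply pow_le | ]; lra. }
  destruct (Nat.le_gt_cases N K) as [HNK|HKN].
  - assert (Hmono : forall m, (sum_f_R0 c N <= sum_f_R0 c (N + m))%R).
    { induction m as [|m IH]; [rewrite Nat.add_0_r; lra|].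
      rewrite Nat.add_succ_r, tech5. pose proof (Hc (S (N + m))). lra. }
    replace K with (N + (K - N))%nat at 1 by lia.
    pose proof (Hmono (K - N)%nat). pose proof (Hrest (S (S K))). lra.
  - assert (Hinv : forall m,
      (sum_f_R0 c (K + m) + r ^ S (S (K + m)) / (1 - r) <= sum_f_R0 c K + r ^ S (S K) / (1 - r))%R).
    { induction m as [|m IH]; [rewrite Nat.add_0_r; lra|].
      rewrite Nat.add_succ_r, tech5.
      pose proof (Htail (S (K + m)) ltac:(lia)).
      replace (r ^ S (S (S (K + m))) / (1 - r))%R
        with (r ^ S (S (K + m)) / (1 - r) - r ^ S (S (K + m)))%R
        by (simpl; field; lra).
      lra. }
    replace N with (K + (N - K))%nat by lia.
    pose proof (Hinv (N - K)%nat). pose proof (Hrest (S (S (K + (N - K))))). lra.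
Qed.

Lemma base_neq0 n : base n <> 0.
Proof. intro H. injection H. lra. Qed.

Lemma inv_base n :
  / base n = ((- INR n / (INR n * INR n + 1))%R, (- 1 / (INR n * INR n + 1))%R).
Proof.
  assert (Hq : (INR n * INR n + 1 > 0)%R) by nra.
  unfold base, Cinv. simpl. f_equal; field; nra.
Qed.

Lemma Rabs_Im_le_Cmod (w : C) : (Rabs (Im w) <= Cmod w)%R.
Proof.
  destruct w as [x y]. unfold Cmod. simpl.
  rewrite <- sqrt_Rsqr_abs. apply sqrt_le_1_alt. unfold Rsqr. nra.
Qed.

Lemma Cmod_inv_base_pow_le n j : (1 <= n)%nat -> (Cmod (/ base n ^ j) <= (/ INR n) ^ j)%R.
Proof.
  intro Hn. assert (Hx : (1 <= INR n)%R) by (apply (le_INR 1); exact Hn).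
  rewrite Cmod_inv by (apply Cpow_nz, base_neq0).
  rewrite Cmod_pow, pow_inv.
  apply Rinv_le_contravar; [apply pow_lt; lra|].
  apply pow_incr. split; [lra|].
  unfold Cmod, base. simpl.
  rewrite <- (sqrt_pow2 (INR n)) at 1 by lra.
  apply sqrt_le_1_alt. nra.
Qed.

(* |Im b^(-1)| + |Im b^(-2)| computed exactly, plus the tail sum_(j>=3) n^(-j). *)
Definition Im_weight_bound (x : R) : R :=
  1 / (x * x + 1) + 2 * x / ((x * x + 1) * (x * x + 1)) + 1 / (x * x * (x - 1)).

Lemma sum_Rabs_Im_inv_base_pow_le n N : (2 <= n)%nat ->
  (sum_f_R0 (fun i => Rabs (Im (/ base n ^ S i))) N <= Im_weight_bound (INR n))%R.
Proof.
  intro Hn. assert (Hx : (2 <= INR n)%R) by (apply (le_INR 2); exact Hn).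
  assert (Hr : (0 <= / INR n < 1)%R).
  { split; [apply Rlt_le, Rinv_0_lt_compat; lra|].
    rewrite <- Rinv_1. apply Rinv_lt_contravar; lra. }
  eapply Rle_trans; [apply (sum_f_R0_le_geometric_tail _ (/ INR n) 1 Hr)|].
  - intro i. apply Rabs_pos.
  - intros i _. eapply Rle_trans; [apply Rabs_Im_le_Cmod|].
    apply Cmod_inv_base_pow_le. lia.
  - set (x := INR n) in *. set (q := (x * x + 1)%R).
    assert (Hq : (q > 0)%R) by (unfold q; nra).
    assert (Im1 : Im (/ base n ^ 1) = (- 1 / q)%R).
    { rewrite <- Cpow_inv by apply base_neq0. rewrite inv_base. simpl.
      unfold q, x in *. field. lra. }
    assert (Im2 : Im (/ base n ^ 2) = (2 * x / (q * q))%R).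
    { rewrite <- Cpow_inv by apply base_neq0. rewrite inv_base. simpl.
      unfold q, x in *. field. lra. }
    cbn [sum_f_R0]. rewrite Im1, Im2.
    rewrite Rabs_left by (apply Rdiv_neg_pos; lra).
    rewrite Rabs_right by (apply Rle_ge, Rdiv_le_0_compat; [lra | apply Rmult_lt_0_compat; lra]).
    unfold Im_weight_bound. fold x q.
    right. field. repeat split; lra.
Qed.

Lemma Im_weight_bound_lt x : (3 <= x)%R -> (x * x * Im_weight_bound x < 2)%R.
Proof.
  intro Hx. unfold Im_weight_bound.
  assert (Hq : (x * x + 1 > 0)%R) by nra.
  replace (x * x * (1 / (x * x + 1) + 2 * x / ((x * x + 1) * (x * x + 1)) + 1 / (x * x * (x - 1))))%R
    with ((x * x * (x * x + 1) * (x - 1) + 2 * x * x * x * (x - 1) + (x * x + 1) * (x * x + 1))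
          / ((x * x + 1) * (x * x + 1) * (x - 1)))%R
    by (field; repeat split; nra).
  apply Rlt_div_l; [apply Rmult_lt_0_compat; nra|].
  set (y := (x - 3)%R). replace x with (y + 3)%R by (unfold y; ring).
  assert (Hy : (0 <= y)%R) by (unfold y; lra).
  assert (Hy2 : (0 <= y * y)%R) by nra.
  assert (Hy3 : (0 <= y * y * y)%R) by nra.
  assert (Hy4 : (0 <= y * y * y * y)%R) by nra.
  assert (Hy5 : (0 <= y * y * y * y * y)%R) by nra.
  nra.
Qed.

Lemma Im_weight_bound_2 : (Im_weight_bound 2 < 1)%R.
Proof. unfold Im_weight_bound. lra. Qed.

Lemma zero_expansion_lead_digit_lt2 n (g : nat -> R) : (2 <= n)%nat ->
  (forall i, Rabs (g i) <= INR n * INR n)%R -> has_expansion (base n) g 0 ->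
  (Rabs (g O) < 2)%R.
Proof.
  intros Hn Hg H0.
  pose proof (base_neq0 n) as Hb.
  pose proof (fun N => sum_Rabs_Im_inv_base_pow_le n N Hn) as Hweights.
  pose proof (expansion_shift _ Hb _ _ (expansion_shift _ Hb _ _ H0)) as H2.
  pose proof (Rabs_Im_expansion_le _ _ _ _ _ (fun i => Hg (S (S i))) Hweights H2) as B2.
  (* The value after two shifts is -b g_0 - g_1, and Im b = 1. *)
  replace (Im _) with (- g O)%R in B2 by (unfold base; simpl; ring).
  rewrite Rabs_Ropp in B2.
  destruct (Nat.eq_dec n 2) as [->|Hn3].
  - pose proof (expansion_shift _ Hb _ _ H2) as H3.
    pose proof (Rabs_Im_expansion_le _ _ _ _ _ (fun i => Hg (S (S (S i)))) Hweights H3) as B3.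
    replace (Im _) with (4 * g O - g 1%nat)%R in B3 by (unfold base; simpl; ring).
    pose proof (Hg 1%nat) as B1. pose proof Im_weight_bound_2.
    replace (INR 2) with 2%R in * by (simpl; ring).
    assert (Htri : (Rabs (4 * g O) <= Rabs (4 * g O - g 1%nat) + Rabs (g 1%nat))%R).
    { replace (4 * g O)%R with (4 * g O - g 1%nat + g 1%nat)%R at 1 by ring.
      apply Rabs_triang. }
    rewrite Rabs_mult, (Rabs_right 4) in Htri by lra.
    lra.
  - assert (H3 : (3 <= INR n)%R)
      by (replace 3%R with (INR 3) by (simpl; ring); apply le_INR; lia).
    pose proof (Im_weight_bound_lt _ H3). lra.
Qed.

Lemma first_difference (s s' : list nat) k :
  (exists j, (j < k)%nat /\ nth j s 0%nat <> nth j s' 0%nat) ->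
  exists p, (p < k)%nat /\ nth p s 0%nat <> nth p s' 0%nat /\
    forall i, (i < p)%nat -> nth i s 0%nat = nth i s' 0%nat.
Proof.
  intro Hex.
  destruct (Wf_nat.dec_inh_nat_subset_has_unique_least_element
    (fun j => (j < k)%nat /\ nth j s 0%nat <> nth j s' 0%nat)) as [p [[[Hpk Hp] Hleast] _]];
    [|exact Hex|].
  - intro j. destruct (Nat.lt_ge_cases j k); [|right; lia].
    destruct (Nat.eq_dec (nth j s 0%nat) (nth j s' 0%nat)); [right | left]; tauto.
  - exists p. split; [exact Hpk|]. split; [exact Hp|].
    intros i Hi. destruct (Nat.eq_dec (nth i s 0%nat) (nth i s' 0%nat)) as [|Hne]; [assumption|].
    assert (Hik : (i < k)%nat) by lia.
    specialize (Hleast i (conj Hik Hne)). lia.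
Qed.

Lemma Rabs_INR_sub_le a a' M :
  (a <= M)%nat -> (a' <= M)%nat -> (Rabs (INR a - INR a') <= INR M)%R.
Proof.
  intros Ha Ha'. apply le_INR in Ha, Ha'.
  pose proof (pos_INR a). pose proof (pos_INR a'). apply Rabs_le. lra.
Qed.

Lemma Rabs_INR_sub_ge2 a a' :
  a <> a' -> a' <> S a -> a <> S a' -> (2 <= Rabs (INR a - INR a'))%R.
Proof.
  intros Hne Hsucc Hsucc'.
  destruct (Nat.lt_ge_cases a a') as [Hlt|Hge].
  - assert (H : (a + 2 <= a')%nat) by lia. apply le_INR in H. rewrite plus_INR in H.
    simpl in H. rewrite Rabs_left1; lra.
  - assert (H : (a' + 2 <= a)%nat) by lia. apply le_INR in H. rewrite plus_INR in H.
    simpl in H. rewrite Rabs_right; lra.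
Qed.

Theorem lemma4p4 (n : nat) (D : nat -> Prop) (k : nat) (ds ds' : list nat) :
  (2 <= n)%nat ->
  (forall d, D d -> (d <= n * n)%nat) ->
  (forall d d', D d -> D d' -> d' <> S d) ->
  (1 <= k)%nat ->
  length ds = k -> length ds' = k ->
  List.Forall D ds -> List.Forall D ds' ->
  (exists j, (j < k)%nat /\ nth j ds 0%nat <> nth j ds' 0%nat) ->
  forall z : C, ~ (in_tile n ds z /\ in_tile n ds' z).
Proof.
  intros Hn HD Hadj _ Hlen Hlen' HDs HDs' Hdiff z [Hz Hz'].
  destruct (tile_expansion _ _ _ Hz) as [d [Hd He]].
  destruct (tile_expansion _ _ _ Hz') as [d' [Hd' He']].
  set (e := fun i => (INR (prepend_digits ds d i) - INR (prepend_digits ds' d' i))%R).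
  assert (He0 : has_expansion (base n) e 0).
  { pose proof (expansion_minus _ _ _ _ _ He He') as Hzz.
    replace (z - z) with (RtoC 0) in Hzz by ring. exact Hzz. }
  destruct (first_difference _ _ _ Hdiff) as [p [Hpk [Hp Hbefore]]].
  assert (Hzero : forall i, (i < p)%nat -> e i = 0%R).
  { intros i Hi. unfold e. rewrite !prepend_digits_nth, (Hbefore i Hi) by lia. ring. }
  assert (Hbound : forall i, (Rabs (e i) <= INR n * INR n)%R).
  { intro i. rewrite <- mult_INR.
    apply Rabs_INR_sub_le; apply prepend_digits_le; auto; eapply Forall_impl; eauto. }
  assert (Hlead : (2 <= Rabs (e p))%R).
  { rewrite Forall_nth in HDs, HDs'.
    unfold e. rewrite !prepend_digits_nth by lia.
    apply Rabs_INR_sub_ge2; [exact Hp | apply Hadj | apply Hadj];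
      first [apply HDs | apply HDs']; lia. }
  pose proof (expansion_drop_zeros _ (base_neq0 n) _ _ _ Hzero He0) as Hdrop.
  rewrite Cmult_0_r in Hdrop.
  pose proof (zero_expansion_lead_digit_lt2 n _ Hn (fun i => Hbound (p + i)%nat) Hdrop) as Hlt.
  cbv beta in Hlt. rewrite Nat.add_0_r in Hlt. lra.
Qed.
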